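(* Let $k\ge1$ be an integer and $\rho\in(0,1)$, and let $\tilde\varepsilon=\rho\,\frac{1+\cos(\frac{2k-1}{2k}\pi)}{1-\cos(\frac{2k-1}{2k}\pi)}$. For $\varepsilon\in[0,\tilde\varepsilon]$ let $p_\varepsilon(X)=T_k\big(\frac{2X}{\rho+\varepsilon}-\frac{\rho-\varepsilon}{\rho+\varepsilon}\big)$ and write $p_\varepsilon(X)=\sum_{i=0}^kc_iX^i$. Then: (i) $\operatorname{sign}(c_i)=(-1)^{k-i}$ for $i=1,\dots,k$, and $(-1)^kc_0\ge0$; (ii) on $[-\varepsilon,\rho]$, $|p_\varepsilon|$ attains its maximum at the points $m_i=\frac{(\rho+\varepsilon)\cos(\frac{i\pi}{k})+\rho-\varepsilon}{2}\in[-\varepsilon,\rho]$, $i=0,\dots,k$, and $p_\varepsilon(m_i)=(-1)^i$.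
   Context: $T_k$ is the Chebyshev polynomial of the first kind of degree $k$, i.e. $T_k(\cos\theta)=\cos(k\theta)$. *)

From HB Require Import structures.
From mathcomp Require Import all_boot all_order all_algebra.
From mathcomp Require Import all_classical all_reals all_analysis.
Set Implicit Arguments. Unset Strict Implicit. Unset Printing Implicit Defensive.
Import Order.TTheory GRing.Theory Num.Theory.
Local Open Scope ring_scope.

(* Chebyshev polynomials of the first kind, by the standard recurrence
   T_0 = 1, T_1 = X, T_{n+2} = 2 X T_{n+1} - T_n
   (these are exactly the polynomials with T_k(cos t) = cos(k t)). *)
Fixpoint cheb_pair (R : ringType) (n : nat) : {poly R} * {poly R} :=
  match n with
  | 0%N => (1, 'X)
  | n'.+1 => let: (a, b) := cheb_pair R n' in (b, 2%:R *: 'X * b - a)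
  end.

Definition chebT (R : ringType) (n : nat) : {poly R} := (cheb_pair R n).1.

Definition p_eps (R : realType) (k : nat) (rho eps : R) : {poly R} :=
  chebT R k \Po ((2 / (rho + eps)) *: 'X - ((rho - eps) / (rho + eps))%:P).

Definition eps_tilde (R : realType) (k : nat) (rho : R) : R :=
  let c := cos (((2 * k)%N.-1)%:R / (2 * k)%:R * pi) in
  rho * (1 + c) / (1 - c).

Definition m_pt (R : realType) (k : nat) (rho eps : R) (i : nat) : R :=
  ((rho + eps) * cos (i%:R * pi / k%:R) + rho - eps) / 2.

From HB Require Import structures.
From mathcomp Require Import all_boot all_order all_algebra.
From mathcomp Require Import all_classical all_reals all_analysis.
From mathcomp Require Import ring lra zify.
Set Implicit Arguments. Unset Strict Implicit. Unset Printing Implicit Defensive.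
Import Order.TTheory GRing.Theory Num.Theory.
Local Open Scope ring_scope.

(* p_eps is T_k composed with the inverse of the increasing affine bijection
   [stretch] from [-1, 1] onto [-eps, rho].  Part (ii) is then the
   equioscillation of T_k at the points cos (i pi / k), where T_k = (-1)^i,
   together with |T_k| <= 1 on [-1, 1].  For part (i), p_eps has a positive
   leading coefficient and k distinct zeros, the images of the zeros
   cos ((2j+1) pi / (2k)) of T_k; the bound eps <= eps_tilde says precisely
   that the smallest of them, the image of cos ((2k-1) pi / (2k)), is
   nonnegative.  Expanding c (X - r_0) ... (X - r_(k-1)) with c > 0, all r_j
   positive except possibly the smallest one, which is >= 0, gives
   coefficients of strictly alternating signs, except that the constant
   coefficient may vanish. *)

Lemma chebTSS (R : nzRingType) n :
  chebT R n.+2 = 2%:R *: 'X * chebT R n.+1 - chebT R n.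
Proof. by rewrite /chebT /=; case: (cheb_pair R n). Qed.

Section ChebyshevDegree.
Variable R : idomainType.
Hypothesis two_neq0 : 2%:R != 0 :> R.

Lemma size_chebT n : size (chebT R n) = n.+1.
Proof.
elim/ltn_ind: n => -[|[|n]] IH; first by rewrite size_poly1.
  exact: size_polyX.
have Tn1_neq0 : chebT R n.+1 != 0 by rewrite -size_poly_gt0 IH.
rewrite chebTSS size_polyDl -scalerAl size_scale // mulrC size_mulX // IH //.
by rewrite size_polyN IH.
Qed.

Lemma lead_coef_chebT n : lead_coef (chebT R n) = 2%:R ^+ n.-1.
Proof.
elim/ltn_ind: n => -[|[|n]] IH; first exact: lead_coefC.
  exact: lead_coefX.
rewrite chebTSS lead_coefDl; last first.
  by rewrite size_polyN -scalerAl size_scale // mulrC size_mulX -?size_poly_gt0 !size_chebT.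
by rewrite -scalerAl lead_coefZ (mulrC 'X) lead_coefMX IH // exprS.
Qed.

End ChebyshevDegree.

Lemma chebT_cos (R : realType) n (t : R) : (chebT R n).[cos t] = cos (n%:R * t).
Proof.
elim/ltn_ind: n => -[|[|n]] IH; first by rewrite hornerC mul0r cos0.
  by rewrite hornerX mul1r.
rewrite chebTSS !hornerE !IH //.
have -> : n.+2%:R * t = n.+1%:R * t + t by rewrite mulrSr mulrDl mul1r.
have -> : n%:R * t = n.+1%:R * t - t by rewrite mulrSr mulrDl mul1r addrK.
rewrite cosB cosD; ring.
Qed.

Lemma norm_horner_chebT_le1 (R : realType) n (y : R) :
  -1 <= y <= 1 -> `|(chebT R n).[y]| <= 1.
Proof. by move=> y_itv; rewrite -(acosK (x := y)) ?in_itv // chebT_cos cos_max. Qed.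

Lemma cos_natmulpi (R : realType) (i : nat) : cos (i%:R * pi) = (-1) ^+ i :> R.
Proof.
elim: i => [|i IH]; first by rewrite mul0r cos0.
by rewrite mulrSr mulrDl mul1r cosDpi IH exprSr mulrN1.
Qed.

Lemma cos_natmulpiDpihalf (R : realType) (i : nat) : cos (i%:R * pi + pi / 2) = 0 :> R.
Proof.
elim: i => [|i IH]; first by rewrite mul0r add0r cos_pihalf.
by rewrite mulrSr mulrDl mul1r addrAC cosDpi IH oppr0.
Qed.

Definition chebT_zero (R : realType) (k j : nat) : R :=
  cos ((2 * j + 1)%:R / (2 * k)%:R * pi).

Section ChebyshevZeros.
Variables (R : realType) (k : nat).
Hypothesis k_gt0 : (0 < k)%N.

Lemma root_chebT_zero j : root (chebT R k) (chebT_zero R k j).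
Proof.
rewrite /root chebT_cos.
have -> : k%:R * ((2 * j + 1)%:R / (2 * k)%:R * pi) = j%:R * pi + pi / 2 :> R.
  by rewrite natrM natrD natrM; field; rewrite pnatr_eq0 -lt0n.
by rewrite cos_natmulpiDpihalf.
Qed.

Lemma chebT_zero_angle_itv j : (j <= k.-1)%N ->
  (2 * j + 1)%:R / (2 * k)%:R * pi \in `[0, pi :> R].
Proof.
move=> le_jk; rewrite in_itv /= mulr_ge0 ?pi_ge0 //=.
rewrite ler_piMl ?pi_ge0 // ler_pdivrMr ?ltr0n ?muln_gt0 // mul1r ler_nat; lia.
Qed.

Lemma chebT_zero_decreasing i j : (i < j <= k.-1)%N ->
  chebT_zero R k j < chebT_zero R k i.
Proof.
move=> /andP[lt_ij le_jk]; rewrite /chebT_zero ltr_cos ?chebT_zero_angle_itv //; last lia.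
by rewrite ltr_pM2r ?pi_gt0 // ltr_pM2r ?invr_gt0 ?ltr0n ?muln_gt0 // ltr_nat; lia.
Qed.

Lemma chebT_zero_lt1 j : (j <= k.-1)%N -> chebT_zero R k j < 1.
Proof.
move=> le_jk; rewrite /chebT_zero -[X in _ < X]cos0 ltr_cos ?chebT_zero_angle_itv //.
  by rewrite mulr_gt0 ?pi_gt0 // divr_gt0 // ltr0n; lia.
by rewrite in_itv /= lexx pi_ge0.
Qed.

Lemma eps_tildeE (rho : R) :
  eps_tilde k rho = rho * (1 + chebT_zero R k k.-1) / (1 - chebT_zero R k k.-1).
Proof. by rewrite /eps_tilde /chebT_zero; have -> : (2 * k).-1 = (2 * k.-1 + 1)%N by lia. Qed.

End ChebyshevZeros.

Lemma signed_coef0_XsubC_mul (R : comNzRingType) (Q : {poly R}) n x :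
  (-1) ^+ n.+1 * (('X - x%:P) * Q)`_0 = x * ((-1) ^+ n * Q`_0).
Proof. rewrite mulrBl coefB coefXM coefCM /= exprS; ring. Qed.

Lemma signed_coefS_XsubC_mul (R : comNzRingType) (Q : {poly R}) n x i :
  (size Q <= n.+1)%N -> (i <= n)%N ->
  (-1) ^+ (n - i) * (('X - x%:P) * Q)`_i.+1 =
  (-1) ^+ (n - i) * Q`_i + x * ((-1) ^+ (n - i.+1) * Q`_i.+1).
Proof.
move=> le_Qn le_in; rewrite mulrBl coefB coefXM coefCM /=.
have [lt_in | eq_in] := ltnP i n.
  rewrite -(subnSK lt_in) exprS; ring.
have -> : Q`_i.+1 = 0 by rewrite nth_default // (leq_trans le_Qn).
ring.
Qed.

Section AlternatingCoefficients.
Variable R : realDomainType.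

Lemma alternating_coef_XsubC_mul (Q : {poly R}) n x :
  (size Q <= n.+1)%N -> (forall i, (i <= n)%N -> 0 < (-1) ^+ (n - i) * Q`_i) ->
  0 <= x -> forall i, (0 < i <= n.+1)%N -> 0 < (-1) ^+ (n.+1 - i) * (('X - x%:P) * Q)`_i.
Proof.
move=> le_Qn alt_Q x_ge0 [//|i] /= le_in; rewrite subSS signed_coefS_XsubC_mul //.
rewrite ltr_wpDr ?alt_Q // mulr_ge0 //.
have [lt_in | le_ni] := ltnP i n; first exact/ltW/alt_Q.
by rewrite nth_default ?mulr0 // (leq_trans le_Qn).
Qed.

Lemma alternating_coef_prod_XsubC (s : seq R) : all (> 0) s ->
  forall i, (i <= size s)%N -> 0 < (-1) ^+ (size s - i) * (\prod_(r <- s) ('X - r%:P))`_i.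
Proof.
elim: s => [_ [|//] _ | x s IH /= /andP[x_gt0 /IH alt_s] [|i] le_is].
- by rewrite big_nil expr0 mul1r coefC.
- by rewrite big_cons subn0 signed_coef0_XsubC_mul mulr_gt0 // -(subn0 (size s)) alt_s.
- by rewrite big_cons alternating_coef_XsubC_mul ?size_prod_XsubC ?ltW.
Qed.

Lemma signr_mul_gt0_sg (m : nat) (v : R) : 0 < (-1) ^+ m * v -> Num.sg v = (-1) ^+ m.
Proof.
rewrite -signr_odd; case: (odd m) => /=; rewrite ?expr1 ?expr0 ?mulN1r ?mul1r.
  by rewrite oppr_gt0 => /ltr0_sg.
by move=> /gtr0_sg.
Qed.

Lemma sgr_coef_scale_prod_XsubC (P : {poly R}) (c : R) n (r : nat -> R) :
  P = c *: (\prod_(0 <= j < n.+1) ('X - (r j)%:P)) -> 0 < c ->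
  (forall j, (j < n)%N -> 0 < r j) -> 0 <= r n ->
  (forall i, (0 < i <= n.+1)%N -> Num.sg P`_i = (-1) ^+ (n.+1 - i)) /\
  0 <= (-1) ^+ n.+1 * P`_0.
Proof.
move=> -> c_gt0 r_gt0 rn_ge0; rewrite big_nat_recr //= mulrC.
have -> : \prod_(0 <= j < n) ('X - (r j)%:P) =
          \prod_(z <- map r (index_iota 0 n)) ('X - z%:P) by rewrite big_map.
set Q := \prod_(z <- _) _.
have size_Q : size Q = n.+1 by rewrite size_prod_XsubC size_map size_iota subn0.
have alt_Q i : (i <= n)%N -> 0 < (-1) ^+ (n - i) * Q`_i.
  have := @alternating_coef_prod_XsubC (map r (index_iota 0 n)).
  rewrite size_map size_iota subn0; apply.
  apply/allP => z /mapP[j]; rewrite mem_iota add0n subn0 => /andP[_ lt_jn] ->.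
  exact: r_gt0.
split=> [i lt_in | ].
  rewrite coefZ sgrM gtr0_sg // mul1r.
  by apply/signr_mul_gt0_sg/alternating_coef_XsubC_mul => //; rewrite size_Q.
rewrite coefZ mulrCA signed_coef0_XsubC_mul.
have := alt_Q 0%N (leq0n n); rewrite subn0 => /ltW Q0.
by apply/mulr_ge0/mulr_ge0; first exact: ltW.
Qed.

End AlternatingCoefficients.

Lemma scaleX_subC_factor (R : fieldType) (a b : R) : a != 0 ->
  a *: 'X - b%:P = a *: ('X - (b / a)%:P).
Proof. by move=> a_neq0; rewrite scalerBr scale_polyC mulrCA divff ?mulr1. Qed.

(* [m_pt k rho eps i] is convertible to [stretch rho eps (cos (i%:R * pi / k%:R))]. *)
Definition stretch (R : numFieldType) (rho eps y : R) : R := ((rho + eps) * y + rho - eps) / 2.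

Section Stretch.
Variables (R : realFieldType) (rho eps : R).
Hypothesis rho_eps_gt0 : 0 < rho + eps.

Lemma stretch_itv y : (-eps <= stretch rho eps y <= rho) = (-1 <= y <= 1).
Proof.
have -> : stretch rho eps y = - eps + (rho + eps) / 2 * (y + 1) by rewrite /stretch; field.
rewrite lerDl pmulr_rge0 ?divr_gt0 // -lerBlDr sub0r; congr (_ && _).
have -> : - eps + (rho + eps) / 2 * (y + 1) = rho - (rho + eps) / 2 * (1 - y) by field.
by rewrite gerBl pmulr_rge0 ?divr_gt0 // subr_ge0.
Qed.

Lemma stretch_surj x : exists y, x = stretch rho eps y.
Proof.
exists ((2 * x - (rho - eps)) / (rho + eps)).
by rewrite /stretch; field; rewrite gt_eqF.
Qed.

Lemma ltr_stretch : {mono stretch rho eps : y z / y < z}.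
Proof. by move=> y z; rewrite /stretch ltr_pM2r ?invr_gt0 // ltrD2r ltrD2r ltr_pM2l. Qed.

Lemma stretch_ge0 c : c < 1 -> eps <= rho * (1 + c) / (1 - c) -> 0 <= stretch rho eps c.
Proof. by move=> c_lt1; rewrite ler_pdivlMr ?subr_gt0 // /stretch => ?; nra. Qed.

End Stretch.

Section PEps.
Variables (R : realType) (k : nat) (rho eps : R).
Hypothesis rho_eps_gt0 : 0 < rho + eps.

Let rho_eps_neq0 : rho + eps != 0. Proof. exact: lt0r_neq0. Qed.

Lemma horner_p_eps_stretch y : (p_eps k rho eps).[stretch rho eps y] = (chebT R k).[y].
Proof.
rewrite horner_comp hornerD hornerN hornerZ hornerX hornerC /stretch.
by congr (_.[_]); field.
Qed.

Let inner_poly_factor : (2 / (rho + eps)) *: 'X - ((rho - eps) / (rho + eps))%:P =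
  (2 / (rho + eps)) *: ('X - ((rho - eps) / 2)%:P).
Proof.
rewrite scaleX_subC_factor ?mulf_neq0 ?invr_neq0 ?pnatr_eq0 //.
by congr (_ *: ('X - _%:P)); field.
Qed.

Lemma size_p_eps : size (p_eps k rho eps) = k.+1.
Proof.
by rewrite /p_eps size_comp_poly2 ?size_chebT ?pnatr_eq0 // inner_poly_factor
  size_scale ?size_XsubC // mulf_neq0 ?invr_neq0 ?pnatr_eq0.
Qed.

Lemma lead_coef_p_eps_gt0 : 0 < lead_coef (p_eps k rho eps).
Proof.
rewrite /p_eps lead_coef_comp inner_poly_factor; last first.
  by rewrite size_scale ?size_XsubC // mulf_neq0 ?invr_neq0 ?pnatr_eq0.
rewrite lead_coefZ lead_coefXsubC mulr1 lead_coef_chebT ?pnatr_eq0 //.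
by rewrite mulr_gt0 ?exprn_gt0 ?divr_gt0 ?ltr0n.
Qed.

Hypothesis k_gt0 : (0 < k)%N.

Lemma stretch_chebT_zero_decreasing i j : (i < j <= k.-1)%N ->
  stretch rho eps (chebT_zero R k j) < stretch rho eps (chebT_zero R k i).
Proof. by move=> lt_ij; rewrite ltr_stretch // chebT_zero_decreasing. Qed.

Lemma p_eps_prod_zeros : p_eps k rho eps =
  lead_coef (p_eps k rho eps) *:
    \prod_(0 <= j < k) ('X - (stretch rho eps (chebT_zero R k j))%:P).
Proof.
pose r j := stretch rho eps (chebT_zero R k j).
rewrite -(big_map r xpredT (fun z => 'X - z%:P)).
apply: all_roots_prod_XsubC.
- by rewrite size_map size_iota subn0 size_p_eps.
- apply/allP => z /mapP[j _ ->].
  by rewrite /root horner_p_eps_stretch; apply: root_chebT_zero.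
rewrite uniq_rootsE map_inj_in_uniq ?iota_uniq // => i j.
rewrite !mem_iota !add0n !subn0 /r => /andP[_ lt_ik] /andP[_ lt_jk] eq_r.
have [lt_ij | lt_ji | //] := ltngtP i j.
  have /stretch_chebT_zero_decreasing : (i < j <= k.-1)%N by lia.
  by rewrite eq_r ltxx.
have /stretch_chebT_zero_decreasing : (j < i <= k.-1)%N by lia.
by rewrite eq_r ltxx.
Qed.

Lemma p_eps_coef_signs : eps <= eps_tilde k rho ->
  (forall i, (1 <= i <= k)%N -> Num.sg (p_eps k rho eps)`_i = (-1) ^+ (k - i)) /\
  0 <= (-1) ^+ k * (p_eps k rho eps)`_0.
Proof.
rewrite eps_tildeE // => eps_le.
have last_zero_ge0 : 0 <= stretch rho eps (chebT_zero R k k.-1).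
  by apply: stretch_ge0; rewrite ?chebT_zero_lt1.
have := @sgr_coef_scale_prod_XsubC _ (p_eps k rho eps)
  (lead_coef (p_eps k rho eps)) k.-1 (fun j => stretch rho eps (chebT_zero R k j)).
rewrite prednK //; apply => //.
- exact: p_eps_prod_zeros.
- exact: lead_coef_p_eps_gt0.
move=> j lt_jk; apply: le_lt_trans last_zero_ge0 _.
by apply: stretch_chebT_zero_decreasing; rewrite lt_jk leqnn.
Qed.

Lemma horner_p_eps_m_pt i : (p_eps k rho eps).[m_pt k rho eps i] = (-1) ^+ i.
Proof.
rewrite horner_p_eps_stretch chebT_cos -cos_natmulpi; congr cos.
by field; rewrite pnatr_eq0 -lt0n.
Qed.

Lemma m_pt_itv i : -eps <= m_pt k rho eps i <= rho.
Proof. by rewrite stretch_itv // cos_geN1 cos_le1. Qed.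

Lemma norm_horner_p_eps_le1 x : -eps <= x <= rho -> `|(p_eps k rho eps).[x]| <= 1.
Proof.
have [y ->] := stretch_surj rho_eps_gt0 x.
by rewrite stretch_itv // horner_p_eps_stretch; apply: norm_horner_chebT_le1.
Qed.

End PEps.

Theorem lemma6 (R : realType) (k : nat) (rho eps : R) :
  (1 <= k)%N -> 0 < rho < 1 -> 0 <= eps <= eps_tilde k rho ->
  (* (i) *)
  ((forall i : nat, (1 <= i <= k)%N ->
      Num.sg (p_eps k rho eps)`_i = (-1) ^+ (k - i)) /\
   0 <= (-1) ^+ k * (p_eps k rho eps)`_0) /\
  (* (ii) *)
  (forall i : nat, (i <= k)%N ->
     -eps <= m_pt k rho eps i <= rho /\
     (p_eps k rho eps).[m_pt k rho eps i] = (-1) ^+ i /\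
     (forall x : R, -eps <= x <= rho ->
        `|(p_eps k rho eps).[x]| <= `|(p_eps k rho eps).[m_pt k rho eps i]|)).
Proof.
move=> k_gt0 /andP[rho_gt0 _] /andP[eps_ge0 eps_le].
have rho_eps_gt0 : 0 < rho + eps by rewrite ltr_wpDr.
split; first exact: p_eps_coef_signs.
move=> i _; rewrite horner_p_eps_m_pt // normrX normrN1 expr1n.
by split; [exact: m_pt_itv | split=> // x; exact: norm_horner_p_eps_le1].
Qed.
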